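(* Let $n\ge1$, $m=2^n$, $A\subseteq\{0,1\}^n$, $a=|A|$. The rank of irreducibility of the orthogonal system $S_A$ equals $IR(S_A)=m-a$. Consequently, the average rank of irreducibility over all $2^m$ orthogonal systems $S_A$, $A\subseteq\{0,1\}^n$, equals $$2^{-m}\sum_{a=0}^{m}(m-a)\binom{m}{a}=\frac{m}{2}.$$
   Context: Boolean algebras are in the language $\{\vee,\cdot,\bar{\ },0,1\}$; the boolean algebra of rank $r\ge1$ is the power set algebra of an $r$-element set. Orthogonal variables: $Z=\{z_\alpha:\alpha\in\{0,1\}^n\}$, $|Z|=m=2^n$. For $A\subseteq\{0,1\}^n$ the orthogonal system is $$S_A=\{z_\alpha=0\mid\alpha\in A\}\cup\{z_\alpha z_\beta=0\mid \alpha\ne\beta\}\cup\{\textstyle\bigvee_{\alpha}z_\alpha=1\}.$$ A nonempty algebraic set (solution set of a system) is irreducible if it is not a finite union of proper algebraic subsets. The rank of irreducibility $IR(S)$ of a system $S$ is the number $k\ge1$ such that the solution set of $S$ is irreducible over the boolean algebra of rank $k$ but reducible over the boolean algebra of every rank $r<k$; if $S$ is inconsistent over every nontrivial boolean algebra, $IR(S)=0$. *)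

From mathcomp Require Import all_boot.
Set Implicit Arguments. Unset Strict Implicit. Unset Printing Implicit Defensive.

Inductive bterm (V : Type) : Type :=
  | BVar of V
  | BJoin of bterm V & bterm V
  | BMeet of bterm V & bterm V
  | BCompl of bterm V
  | BZero
  | BOne.
Arguments BZero {V}. Arguments BOne {V}.

(* The boolean algebra of rank r: the power set of the r-element set 'I_r.
   A point of the affine space B_r^V is an assignment V -> {set 'I_r}. *)
Definition point (r : nat) (V : Type) := V -> {set 'I_r}.

Fixpoint beval (r : nat) (V : Type) (x : point r V) (t : bterm V) : {set 'I_r} :=
  match t with
  | BVar v => x v
  | BJoin t1 t2 => beval x t1 :|: beval x t2
  | BMeet t1 t2 => beval x t1 :&: beval x t2
  | BCompl t1 => ~: beval x t1
  | BZero => set0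
  | BOne => setT
  end.

Definition system (V : Type) := bterm V * bterm V -> Prop.

Definition sol (r : nat) (V : Type) (S : system V) : point r V -> Prop :=
  fun x => forall e, S e -> beval x e.1 = beval x e.2.
Arguments sol r {V} S.

Definition algebraic (r : nat) (V : Type) (Y : point r V -> Prop) : Prop :=
  exists S : system V, forall x, Y x <-> sol r S x.

Definition irreducible (r : nat) (V : Type) (Y : point r V -> Prop) : Prop :=
  (exists x, Y x) /\
  ~ (exists (k : nat) (Ys : nat -> point r V -> Prop),
        (forall i, i < k ->
           [/\ algebraic (Ys i), (forall x, Ys i x -> Y x) & exists x, Y x /\ ~ Ys i x])
        /\ (forall x, Y x <-> exists2 i, i < k & Ys i x)).

Definition reducible (r : nat) (V : Type) (Y : point r V -> Prop) : Prop :=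
  (exists x, Y x) /\ ~ irreducible Y.

Definition IR_is (V : Type) (S : system V) (k : nat) : Prop :=
  match k with
  | 0 => forall r, 1 <= r -> forall x : point r V, ~ sol r S x
  | k'.+1 => irreducible (sol k S) /\
             forall r, 1 <= r -> r < k -> reducible (sol r S)
  end.

Definition bits (n : nat) := {ffun 'I_n -> bool}.

Definition bigJoin (V : Type) (l : seq V) : bterm V :=
  foldr (fun v t => BJoin (BVar v) t) BZero l.

Definition S_orth (n : nat) (A : {set bits n}) : system (bits n) :=
  fun e =>
    (exists2 al, al \in A & e = (BVar al, BZero)) \/
    (exists al be, al != be /\ e = (BMeet (BVar al) (BVar be), BZero)) \/
    e = (bigJoin (enum [set: bits n]), BOne).

(* A solution of S_A over the algebra of rank r is the same as a labelling of
   the r atoms by points of the complement of A: atom i lies in exactly one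
   block x v, and v is not in A.  Whether an equation holds at x depends only
   on the set of labels occurring in x, so an equation true at the generic
   point, which uses each of the c = m - a labels once, holds at every
   solution.  Hence with c atoms the solution set is irreducible, while with
   1 <= r < c atoms some label is always missing, so the solution set is the
   union of the c proper algebraic subsets {x_v = 0}.  The averaging identity is the symmetry A <-> ~A (resp.
   a <-> m - a) together with the binomial theorem. *)
From mathcomp Require Import all_boot.
Set Implicit Arguments. Unset Strict Implicit. Unset Printing Implicit Defensive.

Fixpoint bevalb (V : Type) (f : V -> bool) (t : bterm V) : bool :=
  match t with
  | BVar v => f v
  | BJoin a b => bevalb f a || bevalb f b
  | BMeet a b => bevalb f a && bevalb f b
  | BCompl a => ~~ bevalb f a
  | BZero => false
  | BOne => true
  end.

Lemma in_beval r V (x : point r V) t i :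
  (i \in beval x t) = bevalb (fun v => i \in x v) t.
Proof. by elim: t => /= [v|a IHa b IHb|a IHa b IHb|a IHa||]; rewrite ?inE ?IHa ?IHb. Qed.

Lemma eq_bevalb V (f g : V -> bool) t : f =1 g -> bevalb f t = bevalb g t.
Proof. by move=> fg; elim: t => /= [v|a -> b ->|a -> b ->|a ->||]. Qed.

Lemma beval_bigJoin r V (x : point r V) l i :
  (i \in beval x (bigJoin l)) = has (fun v => i \in x v) l.
Proof. by elim: l => [|v l IH] /=; rewrite ?inE ?IH. Qed.

Lemma beval_transfer r r' V (x : point r V) (y : point r' V) :
  (forall i' : 'I_r', exists i : 'I_r, forall v, (i' \in y v) = (i \in x v)) ->
  forall t s, beval x t = beval x s -> beval y t = beval y s.
Proof.
move=> atom_y t s xts; apply/setP => i'; have [i yi] := atom_y i'.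
by rewrite !in_beval !(eq_bevalb _ yi) -!in_beval xts.
Qed.

Lemma algebraic_solI_eq r V (S : system V) t s :
  algebraic (fun x : point r V => sol r S x /\ beval x t = beval x s).
Proof.
exists (fun e => S e \/ e = (t, s)) => x; split.
- by move=> [solx xts] e [Se | ->]; [apply: solx |].
- move=> solx; split=> [e Se|]; first by apply: solx; left.
  exact: solx (t, s) (or_intror erefl).
Qed.

Lemma irreducible_sol_generic r V (S : system V) (g : point r V) :
  sol r S g ->
  (forall y, sol r S y -> forall t s, beval g t = beval g s -> beval y t = beval y s) ->
  irreducible (sol r S).
Proof.
move=> solg generic; split; first by exists g.
case=> k [Ys [proper cover]].
have [j jk Yjg] := (cover g).1 solg.
have [[S' defYj] _ [y [soly Yjy]]] := proper j jk.
apply: Yjy; apply/defYj => e S'e.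
exact: generic soly _ _ ((defYj g).1 Yjg e S'e).
Qed.

Section Orthogonal.
Variables (n : nat) (A : {set bits n}).

Lemma sol_orthP r (x : point r (bits n)) : sol r (S_orth A) x <->
  [/\ forall v, v \in A -> x v = set0,
      forall u v, u != v -> x u :&: x v = set0
    & forall i, exists v, i \in x v].
Proof.
split=> [solx | [xA xdisj xcover] e].
- split=> [v vA | u v uv | i].
  + exact: solx _ (or_introl (ex_intro2 _ _ v vA erefl)).
  + exact: solx _ (or_intror (or_introl (ex_intro _ u (ex_intro _ v (conj uv erefl))))).
  + have /setP/(_ i) := solx _ (or_intror (or_intror erefl)).
    by rewrite inE beval_bigJoin => /hasP [v _ iv]; exists v.
- move=> [[v vA ->] | [[u [v [uv ->]]] | ->]] /=; [exact: xA | exact: xdisj |].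
  apply/setP => i; rewrite beval_bigJoin inE; have [v iv] := xcover i.
  by apply/hasP; exists v; rewrite ?mem_enum ?inE.
Qed.

Lemma sol_orth_atom r (x : point r (bits n)) : sol r (S_orth A) x ->
  forall i, exists2 v, v \in ~: A & forall u, (i \in x u) = (u == v).
Proof.
move/sol_orthP => [xA xdisj xcover] i; have [v iv] := xcover i.
exists v => [|u]; first by rewrite inE; apply: contraTN iv => /xA ->; rewrite inE.
have [-> // | uv] := eqVneq u v; apply/negP => iu.
by have /setP/(_ i) := xdisj u v uv; rewrite in_setI iu iv in_set0.
Qed.

Lemma sol_orth_card_gt0 r (x : point r (bits n)) :
  0 < r -> sol r (S_orth A) x -> 0 < #|~: A|.
Proof.
by move=> r_gt0 /sol_orth_atom/(_ (Ordinal r_gt0)) [v vA _]; apply/card_gt0P; exists v.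
Qed.

Definition block_pt r (w : bits n) : point r (bits n) :=
  fun v => if v == w then setT else set0.

Lemma block_pt_sol r w : w \in ~: A -> sol r (S_orth A) (block_pt r w).
Proof.
rewrite inE /block_pt => wA; apply/sol_orthP; split.
- by move=> v vA; case: eqP => // vw; rewrite -vw vA in wA.
- move=> u v; case: (u =P w) => [-> | _]; last by rewrite set0I.
  by case: (v =P w) => [-> | _]; rewrite ?eqxx ?setI0.
- by move=> i; exists w; rewrite eqxx inE.
Qed.

Definition generic_pt : point #|~: A| (bits n) :=
  fun v => [set i | enum_val i == v].

Lemma generic_pt_sol : sol _ (S_orth A) generic_pt.
Proof.
apply/sol_orthP; split.
- move=> v vA; apply/setP => i; rewrite !inE.
  by apply: contraTF (enum_valP i) => /eqP ->; rewrite inE vA.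
- move=> u v uv; apply/setP => i; rewrite !inE.
  by apply: contraNF uv => /andP [/eqP <- /eqP <-].
- by move=> i; exists (enum_val i); rewrite inE.
Qed.

Lemma irreducible_sol_orth : irreducible (sol #|~: A| (S_orth A)).
Proof.
apply: (irreducible_sol_generic generic_pt_sol) => y soly.
apply: beval_transfer => i; have [v vA yi] := sol_orth_atom soly i.
exists (enum_rank_in vA v) => u.
by rewrite yi inE enum_rankK_in // eq_sym.
Qed.

Lemma sol_orth_empty_block r (x : point r (bits n)) :
  r < #|~: A| -> sol r (S_orth A) x -> exists2 v, v \in ~: A & x v = set0.
Proof.
move=> r_lt solx; pose label i := odflt [ffun=> false] [pick v | i \in x v].
have labelE i v : i \in x v -> label i = v.
  move=> iv; have [w _ xi] := sol_orth_atom solx i.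
  rewrite /label; case: pickP => [u iu | /(_ v)] /=; last by rewrite iv.
  by move: iu iv; rewrite !xi => /eqP -> /eqP.
have /subsetPn [v vA v_unused] : ~~ (~: A \subset [set label i | i : 'I_r]).
  apply: contraL r_lt => /subset_leq_card le_image.
  by rewrite -leqNgt (leq_trans le_image) // (leq_trans (leq_imset_card _ _)) ?card_ord.
exists v => //; apply/setP => i; rewrite inE; apply/negP => iv.
by rewrite -(labelE i v iv) imset_f in v_unused.
Qed.

Lemma reducible_sol_orth r :
  0 < r -> r < #|~: A| -> reducible (sol r (S_orth A)).
Proof.
move=> r_gt0 r_lt; set c := #|~: A|; have [w wA] : exists w, w \in ~: A.
  by apply/card_gt0P; apply: leq_ltn_trans r_lt.
split; first by exists (block_pt r w); apply: block_pt_sol.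
case=> _; apply; pose lbl j := nth w (enum (~: A)) j.
have lblA j : j < c -> lbl j \in ~: A by rewrite -mem_enum => j_lt; rewrite mem_nth -?cardE.
exists c, (fun j x => sol r (S_orth A) x /\ x (lbl j) = set0); split.
- move=> j j_lt; split; [exact: algebraic_solI_eq (BVar _) BZero | by move=> x [] |].
  exists (block_pt r (lbl j)); split; first exact/block_pt_sol/lblA.
  by case=> _; rewrite /block_pt eqxx => /setP/(_ (Ordinal r_gt0)); rewrite !inE.
- move=> x; split=> [solx | [j _ []] //].
  have [v vA xv] := sol_orth_empty_block r_lt solx.
  exists (index v (enum (~: A))); first by rewrite /c cardE index_mem mem_enum.
  by rewrite /lbl nth_index ?mem_enum.
Qed.

Lemma IR_is_sol_orth k : IR_is (S_orth A) k <-> k = #|~: A|.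
Proof.
split=> [|->].
- case: k => [/= no_sol | k /= [irr red]].
    apply/esym/eqP; rewrite -leqn0 leqNgt; apply/negP => /card_gt0P [w wA].
    exact: no_sol 1 isT _ (block_pt_sol 1 wA).
  have [[x solx] _] := irr; have c_gt0 := sol_orth_card_gt0 (ltn0Sn k) solx.
  case: (ltngtP k.+1 #|~: A|) => [lt | gt | //].
  + by case: (reducible_sol_orth (ltn0Sn k) lt) => _.
  + by case: (red _ c_gt0 gt) => _; case; apply: irreducible_sol_orth.
- case E: #|~: A| => [|c]; last first.
    split=> [|r r_gt0 r_lt]; first by rewrite -E; apply: irreducible_sol_orth.
    by apply: reducible_sol_orth; rewrite ?E.
  by move=> r r_gt0 x /(sol_orth_card_gt0 r_gt0); rewrite E.
Qed.

End Orthogonal.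

Lemma card_bits n : #|bits n| = 2 ^ n.
Proof. by rewrite card_ffun card_bool card_ord. Qed.

Lemma card_set (T : finType) : #|{set T}| = 2 ^ #|T|.
Proof.
have powersetT : powerset [set: T] = [set: {set T}].
  by apply/setP => B; rewrite powersetE subsetT inE.
by rewrite -[LHS]cardsT -powersetT card_powerset cardsT.
Qed.

Lemma sum_cardsC (T : finType) :
  (\sum_(A : {set T}) #|~: A|) * 2 = #|T| * 2 ^ #|T|.
Proof.
have sumC : \sum_(A : {set T}) #|~: A| = \sum_(A : {set T}) #|A|.
  by rewrite (reindex_inj (@setC_inj _)); apply: eq_bigr => A _; rewrite setCK.
rewrite muln2 -addnn {1}sumC -big_split /=.
under eq_bigr do rewrite cardsC.
by rewrite sum_nat_const cardT -cardE card_set mulnC.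
Qed.

Lemma sum_subn_binomial m :
  (\sum_(a < m.+1) (m - a) * 'C(m, a)) * 2 = m * 2 ^ m.
Proof.
have sum_rev : \sum_(a < m.+1) (m - a) * 'C(m, a) = \sum_(a < m.+1) a * 'C(m, a).
  rewrite (reindex_inj rev_ord_inj); apply: eq_bigr => a _ /=.
  by rewrite subKn ?bin_sub // -ltnS.
rewrite muln2 -addnn {1}sum_rev -big_split /=.
rewrite (eq_bigr (fun a : 'I_m.+1 => m * 'C(m, a))) => [|a _]; last first.
  by rewrite -mulnDl subnKC // -ltnS.
rewrite -big_distrr /= -[2]/(1 + 1) expnDn.
by congr (_ * _); apply: eq_bigr => a _; rewrite !exp1n !muln1.
Qed.

Theorem mainTheorem5 (n : nat) (hn : 1 <= n) :
  (forall A : {set bits n}, IR_is (S_orth A) (2 ^ n - #|A|)) /\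
  (forall f : {set bits n} -> nat,
     (forall A, IR_is (S_orth A) (f A)) ->
     (\sum_(A : {set bits n}) f A) * 2 = 2 ^ n * 2 ^ (2 ^ n)) /\
  (\sum_(a < (2 ^ n).+1) (2 ^ n - a) * 'C(2 ^ n, a)) * 2 = 2 ^ n * 2 ^ (2 ^ n).
Proof.
have cardC (A : {set bits n}) : #|~: A| = 2 ^ n - #|A| by rewrite -(card_bits n) -(cardsC A) addKn.
split; first by move=> A; rewrite -cardC; apply/IR_is_sol_orth.
split; last exact: sum_subn_binomial.
move=> f IR_f; rewrite (eq_bigr (fun A => #|~: A|)) => [|A _]; last exact/IR_is_sol_orth.
by rewrite sum_cardsC card_bits.
Qed.
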